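(* Let $(H,B_1,B_2)$ be a Rota-Baxter system of Hopf algebras with descendent operation $\circ$ and cocycle $\sigma$, and let $H_1=\operatorname{Im}(\sigma)$. Define $T:H_1\to H_1$ by $T(a)=S(B_1(a_1))B_2(a_2)$ for $a\in H_1$. Then $H_{B_1,B_2}=(H_1,\circ_1,1,\Delta_1,\epsilon_1,T)$ is a cocommutative Hopf algebra, where $\circ_1,\Delta_1,\epsilon_1$ denote the restrictions of $\circ,\Delta,\epsilon$ to $H_1$.
   Context: $\mathbb{F}$ is a field of characteristic $0$; all vector spaces, algebras, coalgebras, Hopf algebras are over $\mathbb{F}$. Sweedler notation $\Delta(a)=a_1\otimes a_2$ (iterated: $a_1\otimes a_2\otimes a_3$, etc.) is used. A coalgebra homomorphism $f$ satisfies $\Delta(f(a))=f(a_1)\otimes f(a_2)$ and $\epsilon(f(a))=\epsilon(a)$. A Rota-Baxter system of Hopf algebras is a triple $(H,B_1,B_2)$ where $(H,\cdot,1,\Delta,\epsilon,S)$ is a cocommutative Hopf algebra and $B_1,B_2:H\to H$ are coalgebra homomorphisms with $B_1(1)=B_2(1)=1$ such that for all $a,b\in H$: $B_1(a)B_1(b)=B_1(B_1(a_1)\,b\,S(B_2(a_2)))$ and $B_2(a)B_2(b)=B_2(B_1(a_1)\,b\,S(B_2(a_2)))$. Its descendent operation is $a\circ b=B_1(a_1)\,b\,S(B_2(a_2))$ and its cocycle is $\sigma(a)=B_1(a_1)S(B_2(a_2))$, $a,b\in H$. *)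

From HB Require Import structures.
From mathcomp Require Import all_boot all_order all_algebra.
Set Implicit Arguments. Unset Strict Implicit. Unset Printing Implicit Defensive.
Import Order.TTheory GRing.Theory Num.Theory.
Local Open Scope ring_scope.

(* Tensors in H (x) H are represented by finite lists of pairs (finite sums of
   pure tensors); equality of tensors is tested against all bilinear
   (resp. trilinear) forms with values in F, which characterizes equality in
   H (x) H over a field. *)

Section Hopf.
Variables (F : fieldType) (H : lmodType F).

Definition bilinear_form (phi : H -> H -> F) : Prop :=
  (forall k x x' y, phi (k *: x + x') y = k * phi x y + phi x' y) /\
  (forall k x y y', phi x (k *: y + y') = k * phi x y + phi x y').

Definition trilinear_form (psi : H -> H -> H -> F) : Prop :=
  (forall k x x' y z, psi (k *: x + x') y z = k * psi x y z + psi x' y z) /\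
  (forall k x y y' z, psi x (k *: y + y') z = k * psi x y z + psi x y' z) /\
  (forall k x y z z', psi x y (k *: z + z') = k * psi x y z + psi x y z').

Definition teq2 (s t : seq (H * H)) : Prop :=
  forall phi, bilinear_form phi ->
    \sum_(p <- s) phi p.1 p.2 = \sum_(p <- t) phi p.1 p.2.

(* t is a representation of the tensor Delta a by pure tensors of elements of A,
   i.e. a witness that Delta a lies in A (x) A. *)
Definition Arep (A : H -> Prop) (Delta : H -> seq (H * H)) (a : H)
    (t : seq (H * H)) : Prop :=
  (forall p, p \in t -> A p.1 /\ A p.2) /\ teq2 t (Delta a).

Definition linear_map (f : H -> H) : Prop :=
  forall k x y, f (k *: x + y) = k *: f x + f y.

Definition hopf_on (A : H -> Prop) (m : H -> H -> H) (u : H)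
    (Delta : H -> seq (H * H)) (e : H -> F) (s : H -> H) : Prop :=
  [/\ A 0, (forall k x y, A x -> A y -> A (k *: x + y)),
      A u, (forall a b, A a -> A b -> A (m a b)) &
      (forall a, A a -> A (s a))] /\
  (forall a, A a -> exists t, Arep A Delta a t) /\
  [/\ (forall k a a' b, A a -> A a' -> A b ->
          m (k *: a + a') b = k *: m a b + m a' b),
      (forall k a b b', A a -> A b -> A b' ->
          m a (k *: b + b') = k *: m a b + m a b'),
      (forall a b c, A a -> A b -> A c -> m (m a b) c = m a (m b c)) &
      (forall a, A a -> m u a = a /\ m a u = a)] /\
  [/\ (forall k a b, A a -> A b ->
          teq2 (Delta (k *: a + b)) ([seq (k *: p.1, p.2) | p <- Delta a] ++ Delta b)),
      (forall k a b, A a -> A b -> e (k *: a + b) = k * e a + e b),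
      (forall a t, A a -> Arep A Delta a t ->
         forall psi, trilinear_form psi ->
           \sum_(p <- t) \sum_(q <- Delta p.1) psi q.1 q.2 p.2 =
           \sum_(p <- t) \sum_(q <- Delta p.2) psi p.1 q.1 q.2) &
      (forall a t, A a -> Arep A Delta a t ->
         \sum_(p <- t) e p.1 *: p.2 = a /\ \sum_(p <- t) e p.2 *: p.1 = a)] /\
  [/\ (forall a b ta tb, A a -> A b -> Arep A Delta a ta -> Arep A Delta b tb ->
          teq2 (Delta (m a b)) [seq (m p.1 q.1, m p.2 q.2) | p <- ta, q <- tb]),
      teq2 (Delta u) [:: (u, u)],
      (forall a b, A a -> A b -> e (m a b) = e a * e b) &
      e u = 1] /\
  (forall k a b, A a -> A b -> s (k *: a + b) = k *: s a + s b) /\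
  (forall a t, A a -> Arep A Delta a t ->
     \sum_(p <- t) m (s p.1) p.2 = e a *: u /\
     \sum_(p <- t) m p.1 (s p.2) = e a *: u).

Definition cocommutative_on (A : H -> Prop) (Delta : H -> seq (H * H)) : Prop :=
  forall a, A a -> teq2 (Delta a) [seq (p.2, p.1) | p <- Delta a].

Definition cocomm_hopf_on A m u Delta e s : Prop :=
  hopf_on A m u Delta e s /\ cocommutative_on A Delta.

End Hopf.

Section RBS.
Variables (F : fieldType) (H : algType F).
Variables (Delta : H -> seq (H * H)) (eps : H -> F) (S : H -> H).

Definition coalg_hom (B : H -> H) : Prop :=
  [/\ linear_map B,
      (forall a, teq2 (Delta (B a)) [seq (B p.1, B p.2) | p <- Delta a]) &
      (forall a, eps (B a) = eps a)].

Definition desc_op (B1 B2 : H -> H) (a b : H) : H :=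
  \sum_(p <- Delta a) B1 p.1 * b * S (B2 p.2).

Definition cocycle (B1 B2 : H -> H) (a : H) : H :=
  \sum_(p <- Delta a) B1 p.1 * S (B2 p.2).

Definition rb_system (B1 B2 : H -> H) : Prop :=
  [/\ cocomm_hopf_on (fun _ => True) *%R 1 Delta eps S,
      coalg_hom B1, coalg_hom B2, B1 1 = 1 /\ B2 1 = 1 &
      forall a b, B1 a * B1 b = B1 (desc_op B1 B2 a b) /\
                  B2 a * B2 b = B2 (desc_op B1 B2 a b)].

Definition T_map (B1 B2 : H -> H) (a : H) : H :=
  \sum_(p <- Delta a) S (B1 p.1) * B2 p.2.

End RBS.

(* Tensor
   equalities are only tested against scalar bilinear forms; as linear
   functionals separate points (Zorn's lemma), they also hold against bilinear
   maps into any vector space.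

   In a cocommutative Hopf algebra S is an anti-multiplicative, involutive
   coalgebra morphism.  Writing a ∘ b = B1(a1) b S(B2(a2)), the maps B1 and
   S∘B2 being coalgebra morphisms gives Δ(a∘b) = (a1∘b1) ⊗ (a2∘b2) and
   ε(a∘b) = ε(a)ε(b), while the Rota-Baxter identities give
   (a∘b)∘c = B1(a1) B1(b1) c S(B2(b2)) S(B2(a2)) = a∘(b∘c).  Since 1∘a = a and
   σ(a) = a∘1, the image of σ is closed under ∘, σ is idempotent and 1 is a
   two-sided unit on it.  Finally B_i(T a) = S(B_i a), so σ(T a) = T a and
   T is a two-sided ∘-antipode on Im σ. *)

From HB Require Import structures.
From mathcomp Require Import all_boot all_algebra.
From mathcomp Require Import boolp classical_sets.
Set Implicit Arguments. Unset Strict Implicit. Unset Printing Implicit Defensive.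
Import GRing.Theory.
Local Open Scope ring_scope.

Section LinearMaps.
Variable F : fieldType.

Section Basic.
Variables (U V : lmodType F) (g : U -> V).
Hypothesis lin_g : linear g.

Let gL : {linear U -> V} := HB.pack g (GRing.isLinear.Build F U V *:%R g lin_g).

Lemma lin0 : g 0 = 0. Proof. exact: (linear0 gL). Qed.

Lemma linD x y : g (x + y) = g x + g y. Proof. exact: (linearD gL). Qed.

Lemma linZ k x : g (k *: x) = k *: g x. Proof. exact: (linearZZ gL). Qed.

Lemma lin_sum (I : Type) (s : seq I) (h : I -> U) :
  g (\sum_(i <- s) h i) = \sum_(i <- s) g (h i).
Proof. exact: (linear_sum gL). Qed.

End Basic.

Lemma lin_id (U : lmodType F) : linear (fun x : U => x). Proof. by []. Qed.

Lemma lin_comp (U V W : lmodType F) (g : V -> W) (h : U -> V) :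
  linear g -> linear h -> linear (fun x => g (h x)).
Proof. by move=> lg lh k x y; rewrite lh lg. Qed.

Lemma lin_add (U V : lmodType F) (h1 h2 : U -> V) :
  linear h1 -> linear h2 -> linear (fun x => h1 x + h2 x).
Proof. by move=> l1 l2 k x y; rewrite l1 l2 scalerDr addrACA. Qed.

Lemma lin_scalel (U V : lmodType F) (h : U -> F^o) (v : V) :
  linear h -> linear (fun x => h x *: v).
Proof. by move=> lh k x y; rewrite lh scalerDl scalerA. Qed.

Lemma lin_scaler (U V : lmodType F) (h : U -> V) c :
  linear h -> linear (fun x => c *: h x).
Proof. by move=> lh k x y; rewrite lh scalerDr !scalerA mulrC. Qed.

Lemma lin_mull (U : lmodType F) (A : lalgType F) (h : U -> A) c :
  linear h -> linear (fun x => h x * c).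
Proof. by move=> lh k x y; rewrite lh mulrDl scalerAl. Qed.

Lemma lin_mulr (U : lmodType F) (A : algType F) (h : U -> A) c :
  linear h -> linear (fun x => c * h x).
Proof. by move=> lh k x y; rewrite lh mulrDr scalerAr. Qed.

End LinearMaps.

(** * Linear functionals separate points *)

Section LinearFunctionals.
Local Open Scope classical_set_scope.
Variables (F : fieldType) (V : lmodType F).

Definition linear_graph (G : set (V * F)) :=
  (forall y a b, G (y, a) -> G (y, b) -> a = b) /\
  (forall k y z a b, G (y, a) -> G (z, b) -> G (k *: y + z, k * a + b)).

Lemma linear_graph_bigcup (L : set (V * F)) (C : set (set (V * F))) :
  linear_graph L -> (forall X, C X -> linear_graph (X `|` L)) ->
  total_on C subset -> linear_graph (\bigcup_(X in C) X `|` L).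
Proof.
move=> gL gC totC.
have common p q : (\bigcup_(X in C) X `|` L) p -> (\bigcup_(X in C) X `|` L) q ->
    exists2 X, linear_graph (X `|` L) /\ X `<=` \bigcup_(X in C) X &
               (X `|` L) p /\ (X `|` L) q.
  have sub X : C X -> X `<=` \bigcup_(X in C) X by move=> CX r Xr; exists X.
  case=> [[X CX Xp]|Lp] [[Y CY Yq]|Lq].
  - have [XY|YX] := totC _ _ CX CY.
      by exists Y; [split; [apply: gC|apply: sub] | split; left => //; apply: XY].
    by exists X; [split; [apply: gC|apply: sub] | split; left => //; apply: YX].
  - by exists X; [split; [apply: gC|apply: sub] | split; [left|right]].
  - by exists Y; [split; [apply: gC|apply: sub] | split; [right|left]].
  - by exists set0; [rewrite set0U; split=> // r [] | split; right].
split=> [y a b Ga Gb|k y z a b Ga Gb].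
  by have [X [[fX _] _] [Xa Xb]] := common _ _ Ga Gb; apply: fX Xa Xb.
have [X [[_ cX] XC] [Xa Xb]] := common _ _ Ga Gb.
by case: (cX k y z a b Xa Xb) => [/XC|]; [left|right].
Qed.

Lemma linear_graph_extend (M : set (V * F)) (v : V) :
  linear_graph M -> M (0, 0) -> ~ (exists a, M (v, a)) ->
  linear_graph [set p | exists y a c, M (y, a) /\ p = (y + c *: v, a)].
Proof.
move=> [fM cM] M00 Nv; split.
  move=> w a b [y [a' [c [My [-> ->]]]]] [y' [b' [c' [My' [Eyy' ->]]]]].
  have [Ecc'|Ncc'] := eqVneq c c'.
    by move: Eyy'; rewrite Ecc' => /addIr Ey; apply: fM My _; rewrite Ey.
  (* two representations with distinct coefficients would put v in the domain of M *)
  have Ev : v = (c - c')^-1 *: (y' - y).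
    apply: (@scalerI _ _ (c - c')); first by rewrite subr_eq0.
    rewrite scalerA mulfV ?subr_eq0 // scale1r scalerBl.
    have -> : y' = y + c *: v - c' *: v by rewrite Eyy' addrK.
    by rewrite [RHS]addrC !addrA addNr add0r.
  case: Nv; exists ((c - c')^-1 * (b' - a')).
  have := cM (-1) _ _ _ _ My My'; rewrite scaleN1r mulN1r addrC [- a' + _]addrC => Mdiff.
  by have := cM ((c - c')^-1) _ _ _ _ Mdiff M00; rewrite !addr0 -Ev.
move=> k w1 w2 a b [y [a' [c [My [-> ->]]]]] [y' [b' [c' [My' [-> ->]]]]].
exists (k *: y + y'), (k * a' + b'), (k * c + c'); split; first exact: cM.
by congr (_, _); rewrite scalerDr scalerDl scalerA addrACA.
Qed.

Lemma exists_linear_functional (x : V) :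
  x != 0 -> exists f : V -> F^o, linear f /\ f x = 1.
Proof.
move=> x_neq0.
pose L : set (V * F) := [set p | exists c, p = (c *: x, c)].
have gL : linear_graph L.
  split=> [y a b [c [-> ->]] [d [Ecd ->]]|k y z a b [c [-> ->]] [d [-> ->]]].
    apply/eqP; rewrite -subr_eq0; apply/eqP.
    have /eqP : (c - d) *: x = 0 by rewrite scalerBl Ecd subrr.
    by rewrite scaler_eq0 (negbTE x_neq0) orbF => /eqP.
  by exists (k * c + d); rewrite scalerDl scalerA.
(* L is added to every candidate so that the empty chain is admissible *)
have [A [gAL maxA]] : exists A, linear_graph (A `|` L) /\
    forall B, A `<` B -> ~ linear_graph (B `|` L).
  by apply: Zorn_bigcup => C gC totC; apply: linear_graph_bigcup.
set M := A `|` L; have [fM cM] := gAL.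
have M_x1 : M (x, 1) by right; exists 1; rewrite scale1r.
have M00 : M (0, 0).
  by have := cM (-1) _ _ _ _ M_x1 M_x1; rewrite scaleN1r addNr mulN1r addNr.
have totM v : exists a, M (v, a).
  apply/not_existsP => Nv; have Nv' : ~ exists a, M (v, a) by case=> a /Nv.
  pose E := [set p | exists y a c, M (y, a) /\ p = (y + c *: v, a)].
  have ME : M `<=` E by move=> [y a] My; exists y, a, 0; rewrite scale0r addr0.
  apply: (maxA E).
    split=> [p Ap|EA]; first by apply: ME; left.
    have /EA Av : E (v, 0) by exists 0, 0, 1; rewrite scale1r add0r.
    by apply: Nv'; exists 0; left.
  have -> : E `|` L = E by apply/seteqP; split=> p; [case=> // Lp; apply: ME; right|left].
  exact: linear_graph_extend.
pose f v := projT1 (cid (totM v)).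
have Mf v : M (v, f v) := projT2 (cid (totM v)).
exists f; split; last exact: fM (Mf x) M_x1.
by move=> k y z; apply: fM (Mf _) (cM _ _ _ _ _ (Mf y) (Mf z)).
Qed.

Lemma linear_functionals_separate (x y : V) :
  (forall f : V -> F^o, linear f -> f x = f y) -> x = y.
Proof.
move=> eq_f; apply/eqP; rewrite -subr_eq0; apply/negPn/negP => /exists_linear_functional.
case=> f [lin_f]; rewrite -scaleN1r addrC lin_f eq_f // (@scaleN1r _ F^o) addNr => E.
by apply: (negP (@oner_neq0 F)); apply/eqP; exact: (esym E).
Qed.

End LinearFunctionals.

Section Multilinear.
Variables (F : fieldType) (H : lmodType F).

Definition bilinear_map (V : lmodType F) (G : H -> H -> V) :=
  (forall y, linear (fun x => G x y)) /\ (forall x, linear (fun y => G x y)).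

Definition trilinear_map (V : lmodType F) (K : H -> H -> H -> V) :=
  [/\ forall y z, linear (fun x => K x y z), forall x z, linear (fun y => K x y z)
    & forall x y, linear (fun z => K x y z)].

Definition quadrilinear_map (V : lmodType F) (K : H -> H -> H -> H -> V) :=
  [/\ forall b c d, linear (fun a => K a b c d), forall a c d, linear (fun b => K a b c d),
      forall a b d, linear (fun c => K a b c d) & forall a b c, linear (fun d => K a b c d)].

Lemma bilinear_formP (phi : H -> H -> F) :
  bilinear_form phi -> bilinear_map (phi : H -> H -> F^o).
Proof. by case=> phi1 phi2; split=> z k x y; rewrite ?phi1 ?phi2. Qed.

Lemma linear_trilinear_form (V : lmodType F) (K : H -> H -> H -> V) (f : V -> F^o) :
  trilinear_map K -> linear f -> trilinear_form (fun x y z => f (K x y z)).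
Proof.
case=> K1 K2 K3 lin_f.
by split; [|split] => *; rewrite ?K1 ?K2 ?K3 (linD lin_f) (linZ lin_f).
Qed.

Lemma teq2_sym (s t : seq (H * H)) : teq2 s t -> teq2 t s.
Proof. by move=> st phi phiP; rewrite st. Qed.

Lemma teq2_sum (V : lmodType F) s t (G : H -> H -> V) :
  teq2 s t -> bilinear_map G -> \sum_(p <- s) G p.1 p.2 = \sum_(p <- t) G p.1 p.2.
Proof.
move=> st [G1 G2]; apply: linear_functionals_separate => f lin_f.
rewrite !(lin_sum lin_f); apply: (st (fun x y => f (G x y))); split=> *.
  by rewrite G1 (linD lin_f) (linZ lin_f).
by rewrite G2 (linD lin_f) (linZ lin_f).
Qed.

End Multilinear.

(** * Sweedler calculus in a cocommutative Hopf algebra *)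

Section Sweedler.
Variables (F : fieldType) (H : algType F).
Variables (Delta : H -> seq (H * H)) (eps : H -> F) (S : H -> H).

Definition sweedler (V : lmodType F) (a : H) (G : H -> H -> V) : V :=
  \sum_(p <- Delta a) G p.1 p.2.

Local Notation "\sw_ ( x , y <- a ) E" := (sweedler a (fun x y => E))
  (at level 41, E at level 41, x name, y name,
   format "'[' \sw_ ( x ,  y  <-  a ) '/  '  E ']'").

Definition sweedler4 (V : lmodType F) (a : H) (K : H -> H -> H -> H -> V) : V :=
  \sw_(b, c <- a) \sw_(b1, b2 <- b) \sw_(c1, c2 <- c) K b1 b2 c1 c2.

Definition twist (f g : H -> H) (a y : H) : H := \sw_(x, z <- a) f x * y * g z.

Hypothesis hopfH : cocomm_hopf_on (fun _ => True) *%R 1 Delta eps S.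

Fact Delta_linear k a b :
  teq2 (Delta (k *: a + b)) ([seq (k *: p.1, p.2) | p <- Delta a] ++ Delta b).
Proof. by case: hopfH => [[_ [_ [_ [[DeltaL _ _ _] _]]]] _]; apply: DeltaL. Qed.

Fact eps_linear : linear (eps : H -> F^o).
Proof. by case: hopfH => [[_ [_ [_ [[_ epsL _ _] _]]]] _] k x y; apply: epsL. Qed.

Fact coassoc a psi : trilinear_form psi ->
  \sum_(p <- Delta a) \sum_(q <- Delta p.1) psi q.1 q.2 p.2 =
  \sum_(p <- Delta a) \sum_(q <- Delta p.2) psi p.1 q.1 q.2.
Proof. by case: hopfH => [[_ [_ [_ [[_ _ coA _] _]]]] _]; apply: coA. Qed.

Fact counit a :
  \sum_(p <- Delta a) eps p.1 *: p.2 = a /\ \sum_(p <- Delta a) eps p.2 *: p.1 = a.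
Proof. by case: hopfH => [[_ [_ [_ [[_ _ _ coU] _]]]] _]; apply: coU. Qed.

Fact Delta_mul a b :
  teq2 (Delta (a * b)) [seq (p.1 * q.1, p.2 * q.2) | p <- Delta a, q <- Delta b].
Proof. by case: hopfH => [[_ [_ [_ [_ [[DeltaM _ _ _] _]]]]] _]; apply: DeltaM. Qed.

Fact Delta1 : teq2 (Delta 1) [:: (1, 1)].
Proof. by case: hopfH => [[_ [_ [_ [_ [[_ Delta1 _ _] _]]]]] _]. Qed.

Fact eps_mul a b : eps (a * b) = eps a * eps b.
Proof. by case: hopfH => [[_ [_ [_ [_ [[_ _ epsM _] _]]]]] _]; apply: epsM. Qed.

Fact eps1 : eps 1 = 1.
Proof. by case: hopfH => [[_ [_ [_ [_ [[_ _ _ eps1] _]]]]] _]. Qed.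

Fact S_linear : linear S.
Proof. by case: hopfH => [[_ [_ [_ [_ [_ [SL _]]]]]] _] k x y; apply: SL. Qed.

Fact sweedler_antipodel a : \sw_(x, y <- a) S x * y = eps a *: 1.
Proof. by case: hopfH => [[_ [_ [_ [_ [_ [_ antiS]]]]]] _]; case: (antiS a (Delta a)). Qed.

Fact sweedler_antipoder a : \sw_(x, y <- a) x * S y = eps a *: 1.
Proof. by case: hopfH => [[_ [_ [_ [_ [_ [_ antiS]]]]]] _]; case: (antiS a (Delta a)). Qed.

Fact cocomm a : teq2 (Delta a) [seq (p.2, p.1) | p <- Delta a].
Proof. by case: hopfH => [_ cocommH]; apply: cocommH. Qed.

Lemma eq_sweedler (V : lmodType F) a (G G' : H -> H -> V) :
  (forall x y, G x y = G' x y) -> sweedler a G = sweedler a G'.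
Proof. by move=> eqG; apply: eq_bigr => p _; rewrite eqG. Qed.

Lemma sweedler_teq2 (V : lmodType F) a t (G : H -> H -> V) :
  teq2 t (Delta a) -> bilinear_map G -> sweedler a G = \sum_(p <- t) G p.1 p.2.
Proof. by move=> ta G_bil; rewrite /sweedler (teq2_sum (teq2_sym ta)). Qed.

Lemma lin_sweedler (V W : lmodType F) (g : V -> W) a (G : H -> H -> V) :
  linear g -> g (sweedler a G) = \sw_(x, y <- a) g (G x y).
Proof. by move=> lin_g; rewrite /sweedler (lin_sum lin_g). Qed.

Lemma exchange_sweedler (V : lmodType F) a b (K : H -> H -> H -> H -> V) :
  \sw_(x, y <- a) \sw_(u, v <- b) K x y u v = \sw_(u, v <- b) \sw_(x, y <- a) K x y u v.
Proof. exact: exchange_big. Qed.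

Lemma mulr_sweedlerr c a (G : H -> H -> H) : c * sweedler a G = \sw_(x, y <- a) c * G x y.
Proof. exact: mulr_sumr. Qed.

Lemma mulr_sweedlerl c a (G : H -> H -> H) : sweedler a G * c = \sw_(x, y <- a) G x y * c.
Proof. exact: mulr_suml. Qed.

Lemma scaler_sweedler (V : lmodType F) k a (G : H -> H -> V) :
  k *: sweedler a G = \sw_(x, y <- a) k *: G x y.
Proof. exact: scaler_sumr. Qed.

Lemma sweedler_is_linear (V : lmodType F) (G : H -> H -> V) :
  bilinear_map G -> linear (fun a => sweedler a G).
Proof.
move=> [G1 G2] k a b; rewrite /sweedler (teq2_sum (Delta_linear k a b)); last by split.
rewrite big_cat big_map /= scaler_sumr; congr (_ + _).
by apply: eq_bigr => p _; rewrite (linZ (G1 _)).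
Qed.

Lemma sweedler_linear_param (U V : lmodType F) a (K : H -> H -> U -> V) :
  (forall x y, linear (K x y)) -> linear (fun u => \sw_(x, y <- a) K x y u).
Proof.
move=> K_lin k u v; rewrite /sweedler scaler_sumr -big_split /=.
by apply: eq_bigr => p _; rewrite K_lin.
Qed.

Lemma bilinear_sweedlerl (V : lmodType F) (G : H -> H -> V) a X c :
  bilinear_map G -> G (sweedler a X) c = \sw_(x, y <- a) G (X x y) c.
Proof. by case=> G1 _; rewrite (lin_sweedler _ _ (G1 c)). Qed.

Lemma bilinear_sweedlerr (V : lmodType F) (G : H -> H -> V) a X c :
  bilinear_map G -> G c (sweedler a X) = \sw_(x, y <- a) G c (X x y).
Proof. by case=> _ G2; rewrite (lin_sweedler _ _ (G2 c)). Qed.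

Lemma lin_bilinearl (U V : lmodType F) (G : H -> H -> V) (h : U -> H) c :
  bilinear_map G -> linear h -> linear (fun x => G (h x) c).
Proof. by case=> G1 _; apply: lin_comp (G1 c). Qed.

Lemma lin_bilinearr (U V : lmodType F) (G : H -> H -> V) (h : U -> H) c :
  bilinear_map G -> linear h -> linear (fun x => G c (h x)).
Proof. by case=> _ G2; apply: lin_comp (G2 c). Qed.

Ltac lin_hint := fail.
Ltac lin_step :=
  match goal with
  | |- bilinear_map _ => split; intro
  | |- trilinear_map _ => split; intros
  | |- quadrilinear_map _ => split; intros
  | |- forall _, _ => intro
  | |- linear (fun x => x) => apply: lin_id
  | |- linear (GRing.mul _) => apply: (lin_mulr _ (@lin_id _ _))
  | |- linear (fun _ => _ * _) => first [apply: lin_mull | apply: lin_mulr]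
  | |- linear (fun _ => _ *: _) => first [apply: lin_scalel | apply: lin_scaler]
  | |- linear (fun _ => _ + _) => apply: lin_add
  | |- linear (fun _ => sweedler _ _) =>
      first [apply: sweedler_linear_param | apply: lin_comp (sweedler_is_linear _) _]
  | |- linear _ => first
      [ lin_hint | assumption | exact: S_linear | exact: eps_linear
      | eapply lin_comp; [solve [eassumption | exact: S_linear | exact: eps_linear] |]
      | eapply lin_bilinearl; [eassumption|] | eapply lin_bilinearr; [eassumption|] ]
  end.
Ltac lin_tac := repeat lin_step.

Lemma sweedler_cocomm (V : lmodType F) a (G : H -> H -> V) :
  bilinear_map G -> sweedler a G = \sw_(x, y <- a) G y x.
Proof. by move=> G_bil; rewrite /sweedler (teq2_sum (cocomm a)) // big_map. Qed.

Lemma sweedler_coassoc (V : lmodType F) a (K : H -> H -> H -> V) : trilinear_map K ->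
  \sw_(x, y <- a) \sw_(u, v <- x) K u v y = \sw_(x, y <- a) \sw_(u, v <- y) K x u v.
Proof.
move=> K_tri; apply: linear_functionals_separate => f lin_f.
rewrite !(lin_sweedler _ _ lin_f) /sweedler.
under eq_bigr do rewrite (lin_sum lin_f).
under [RHS]eq_bigr do rewrite (lin_sum lin_f).
exact: coassoc (linear_trilinear_form K_tri lin_f).
Qed.

Lemma sweedler_counitl_eq (V : lmodType F) a (G : H -> H -> V) (g : H -> V) :
  linear g -> (forall x y, G x y = eps x *: g y) -> sweedler a G = g a.
Proof.
move=> lin_g eqG; rewrite -[in RHS](counit a).1 (lin_sum lin_g).
by apply: eq_bigr => p _; rewrite eqG (linZ lin_g).
Qed.

Lemma sweedler_counitr_eq (V : lmodType F) a (G : H -> H -> V) (g : H -> V) :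
  linear g -> (forall x y, G x y = eps y *: g x) -> sweedler a G = g a.
Proof.
move=> lin_g eqG; rewrite -[in RHS](counit a).2 (lin_sum lin_g).
by apply: eq_bigr => p _; rewrite eqG (linZ lin_g).
Qed.

Lemma sweedler_counitr (V : lmodType F) a (g : H -> V) :
  linear g -> \sw_(x, y <- a) eps y *: g x = g a.
Proof. by move=> lin_g; apply: sweedler_counitr_eq. Qed.

Lemma sweedler_mul (V : lmodType F) a b (G : H -> H -> V) : bilinear_map G ->
  sweedler (a * b) G = \sw_(x, y <- a) \sw_(u, v <- b) G (x * u) (y * v).
Proof. by move=> G_bil; rewrite /sweedler (teq2_sum (Delta_mul a b)) // big_allpairs_dep. Qed.

Lemma sweedler1 (V : lmodType F) (G : H -> H -> V) : bilinear_map G -> sweedler 1 G = G 1 1.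
Proof. by move=> G_bil; rewrite /sweedler (teq2_sum Delta1) // big_seq1. Qed.

Lemma sweedler_antipodel_eq (V : lmodType F) a (G : H -> H -> V) (g : H -> V) :
  linear g -> (forall x y, G x y = g (S x * y)) -> sweedler a G = eps a *: g 1.
Proof.
move=> lin_g eqG; rewrite (eq_sweedler _ eqG) -(lin_sweedler _ _ lin_g).
by rewrite sweedler_antipodel (linZ lin_g).
Qed.

Lemma sweedler_antipoder_eq (V : lmodType F) a (G : H -> H -> V) (g : H -> V) :
  linear g -> (forall x y, G x y = g (x * S y)) -> sweedler a G = eps a *: g 1.
Proof.
move=> lin_g eqG; rewrite (eq_sweedler _ eqG) -(lin_sweedler _ _ lin_g).
by rewrite sweedler_antipoder (linZ lin_g).
Qed.

Ltac sweedler_congr := repeat (apply: eq_sweedler => ? ?).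

Lemma antipode1 : S 1 = 1.
Proof.
by have := sweedler_antipodel 1; rewrite sweedler1 ?eps1 ?scale1r ?mulr1 //; lin_tac.
Qed.

(* Both sides are convolution inverses of the multiplication of H. *)
Lemma antipodeM a b : S (a * b) = S b * S a.
Proof.
rewrite -[S b](sweedler_counitr b S_linear) -[S a](sweedler_counitr a S_linear).
rewrite mulr_sweedlerl.
under eq_sweedler => u v do rewrite mulr_sweedlerr.
rewrite exchange_sweedler.
transitivity (\sw_(x, y <- a) \sw_(u, v <- b) \sw_(y1, y2 <- y) \sw_(v1, v2 <- v)
                 S u * S x * (y1 * v1 * S (y2 * v2))); last first.
  apply: eq_sweedler => x y; apply: eq_sweedler => u v.
  under eq_sweedler => y1 y2 do rewrite -mulr_sweedlerr.
  have := sweedler_antipoder (y * v); rewrite sweedler_mul /=; last by lin_tac.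
  move=> E; rewrite -mulr_sweedlerr E eps_mul.
  by rewrite -!scalerAl -!scalerAr scalerA mulr1 mulrC.
under eq_sweedler => x y do rewrite exchange_sweedler.
rewrite -sweedler_coassoc; last by lin_tac.
under eq_sweedler => e y2.
  rewrite (@sweedler_antipodel_eq _ e _ (fun z => \sw_(x, w <- b) \sw_(v1, v2 <- w)
              S x * (z * v1 * S (y2 * v2))));
    [over | lin_tac | by move=> * /=; sweedler_congr; rewrite !mulrA].
rewrite (@sweedler_counitl_eq _ a _ (fun y2 => \sw_(x, w <- b) \sw_(v1, v2 <- w)
            S x * (1 * v1 * S (y2 * v2)))) /=; [|lin_tac|by []].
rewrite -sweedler_coassoc; last by lin_tac.
under eq_sweedler => e v2.
  rewrite (@sweedler_antipodel_eq _ e _ (fun z => z * S (a * v2)));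
    [over | lin_tac | by move=> * /=; rewrite mul1r mulrA].
rewrite (@sweedler_counitl_eq _ b _ (fun v2 => 1 * S (a * v2))) /=; [|lin_tac|by []].
by rewrite mul1r.
Qed.

Lemma eps_antipode a : eps (S a) = eps a.
Proof.
rewrite -[in LHS](sweedler_counitr a (@lin_id _ H)) (lin_sweedler _ _ S_linear).
rewrite (lin_sweedler _ _ eps_linear) (@sweedler_antipodel_eq _ a _ (eps : H -> F^o)).
- by rewrite eps1; exact: mulr1.
- exact: eps_linear.
- by move=> x y /=; rewrite (linZ S_linear) (linZ eps_linear) eps_mul mulrC.
Qed.

Lemma sweedler4_coassoc (V : lmodType F) a (K : H -> H -> H -> H -> V) :
  quadrilinear_map K -> sweedler4 a K =
  \sw_(b1, c <- a) \sw_(d, c2 <- c) \sw_(b2, c1 <- d) K b1 b2 c1 c2.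
Proof.
case=> K1 K2 K3 K4; rewrite /sweedler4.
rewrite (sweedler_coassoc a (K := fun b1 b2 c => \sw_(c1, c2 <- c) K b1 b2 c1 c2)).
  2: by lin_tac.
apply: eq_sweedler => b1 c.
by rewrite -(sweedler_coassoc c (K := fun b2 c1 c2 => K b1 b2 c1 c2)) //; lin_tac.
Qed.

Lemma sweedler4_swap23 (V : lmodType F) a (K : H -> H -> H -> H -> V) :
  quadrilinear_map K -> sweedler4 a K = sweedler4 a (fun b1 b2 c1 c2 => K b1 c1 b2 c2).
Proof.
move=> K_quad; have K'_quad : quadrilinear_map (fun b1 b2 c1 c2 => K b1 c1 b2 c2).
  by case: K_quad => K1 K2 K3 K4; split.
rewrite !sweedler4_coassoc //; apply: eq_sweedler => b1 c; apply: eq_sweedler => d c2.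
by rewrite sweedler_cocomm //; case: K_quad => K1 K2 K3 K4; lin_tac.
Qed.

Lemma sweedler4_swap34 (V : lmodType F) a (K : H -> H -> H -> H -> V) :
  quadrilinear_map K -> sweedler4 a K = sweedler4 a (fun b1 b2 c1 c2 => K b1 b2 c2 c1).
Proof.
case=> K1 K2 K3 K4; rewrite /sweedler4; apply: eq_sweedler => b c.
by apply: eq_sweedler => b1 b2; rewrite sweedler_cocomm //; lin_tac.
Qed.

Lemma sweedler_mul_eq (V : lmodType F) a b (K : H -> H -> H -> H -> V) (G : H -> H -> V) :
  bilinear_map G -> (forall x y u v, K x y u v = G (x * u) (y * v)) ->
  \sw_(x, y <- a) \sw_(u, v <- b) K x y u v = sweedler (a * b) G.
Proof. by move=> G_bil eqK; rewrite sweedler_mul //; sweedler_congr; rewrite eqK. Qed.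

Lemma scale_counit_sweedler4 (V : lmodType F) a (G : H -> H -> V) x y : bilinear_map G ->
  eps a *: G x y = sweedler4 a (fun b1 b2 c1 c2 => G (x * (b1 * S b2)) (y * (c1 * S c2))).
Proof.
move=> G_bil; symmetry; rewrite /sweedler4.
transitivity (\sw_(b, c <- a) eps c *: (eps b *: G x y)); last first.
  by rewrite (@sweedler_counitr_eq _ a _ (fun b => eps b *: G x y)) //; lin_tac.
apply: eq_sweedler => b c.
under eq_sweedler => b1 b2.
  rewrite (@sweedler_antipoder_eq _ c _ (fun z => G (x * (b1 * S b2)) (y * z)));
    [over|lin_tac|by []].
rewrite (@sweedler_antipoder_eq _ b _ (fun z => eps c *: G (x * z) (y * 1))); [|lin_tac|by []].
by rewrite !mulr1 !scalerA mulrC.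
Qed.

(* (S a)_1 ⊗ (S a)_2 = (S a1)_1 a2 S(a4) ⊗ (S a1)_2 a3 S(a5)
                     = (S(a1) a2)_1 S(a4) ⊗ (S(a1) a2)_2 S(a5) = S(a1) ⊗ S(a2),
   where cocommutativity is used to reorder the Sweedler indices. *)
Lemma sweedler_antipode (V : lmodType F) a (G : H -> H -> V) : bilinear_map G ->
  sweedler (S a) G = \sw_(x, y <- a) G (S x) (S y).
Proof.
move=> G_bil; pose GS d u v := \sw_(d1, d2 <- d) G (u * S d1) (v * S d2).
rewrite -[in LHS](sweedler_counitr a (@lin_id _ H)).
rewrite (lin_sweedler _ _ (lin_comp (sweedler_is_linear G_bil) S_linear)).
under eq_sweedler => x y.
  rewrite (linZ S_linear) (linZ (sweedler_is_linear G_bil)) scaler_sweedler.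
  under eq_sweedler => p q do rewrite (scale_counit_sweedler4 _ _ _ G_bil).
  under eq_sweedler => p q do [rewrite sweedler4_swap23; last by lin_tac].
  over.
rewrite /sweedler4.
under eq_sweedler => x y do rewrite exchange_sweedler.
under eq_sweedler => x y.
  under eq_sweedler => c d.
    rewrite (@sweedler_mul_eq _ (S x) c _ (GS d)); [over|rewrite /GS; lin_tac|].
    by move=> *; rewrite /GS; sweedler_congr; rewrite !mulrA.
  over.
rewrite -(sweedler_coassoc a (K := fun x c d => sweedler (S x * c) (GS d))); last first.
  by rewrite /GS; lin_tac.
under eq_sweedler => e d.
  rewrite (@sweedler_antipodel_eq _ e _ (fun z => sweedler z (GS d)));
    [over|rewrite /GS; lin_tac|by []].
rewrite (@sweedler_counitl_eq _ a _ (fun d => sweedler 1 (GS d))) /=;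
  [|rewrite /GS; lin_tac|by []].
rewrite sweedler1 /GS; last by lin_tac.
by sweedler_congr; rewrite !mul1r.
Qed.

Lemma antipodeK a : S (S a) = a.
Proof.
transitivity (\sw_(x, y <- a) \sw_(y1, y2 <- y) S (S x) * (S y1 * y2)).
  rewrite -[in LHS](sweedler_counitr a (@lin_id _ H)).
  rewrite (lin_sweedler _ _ (lin_comp S_linear S_linear)).
  apply: eq_sweedler => x y; rewrite -mulr_sweedlerr sweedler_antipodel -scalerAr mulr1.
  by rewrite !(linZ S_linear).
rewrite -(sweedler_coassoc a (K := fun x y1 y2 => S (S x) * (S y1 * y2))); last by lin_tac.
under eq_sweedler => e y2.
  under eq_sweedler => x y1 do rewrite mulrA -antipodeM.
  rewrite sweedler_cocomm; last by lin_tac.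
  rewrite (@sweedler_antipoder_eq _ e _ (fun z => S z * y2)); [over|lin_tac|by []].
rewrite (@sweedler_counitl_eq _ a _ (fun y2 => S 1 * y2)) /=; [|lin_tac|by []].
by rewrite antipode1 mul1r.
Qed.

Definition coalg_morph (f : H -> H) :=
  [/\ linear f,
      forall (V : lmodType F) a (G : H -> H -> V), bilinear_map G ->
        sweedler (f a) G = \sw_(x, y <- a) G (f x) (f y)
    & forall a, eps (f a) = eps a].

Lemma coalg_hom_morph f : coalg_hom Delta eps f -> coalg_morph f.
Proof.
case=> lin_f Delta_f eps_f; split=> // V a G G_bil.
by rewrite /sweedler (teq2_sum (Delta_f a)) // big_map.
Qed.

Lemma coalg_morph_antipode : coalg_morph S.
Proof. split; [exact: S_linear|exact: sweedler_antipode|exact: eps_antipode]. Qed.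

Lemma coalg_morph_comp f g : coalg_morph f -> coalg_morph g -> coalg_morph (fun x => f (g x)).
Proof.
case=> lin_f Delta_f eps_f [lin_g Delta_g eps_g]; split.
- exact: lin_comp.
- by move=> V a G G_bil; rewrite Delta_f // Delta_g //; lin_tac.
- by move=> a; rewrite eps_f eps_g.
Qed.

Lemma coalg_morph_antipodel f a : coalg_morph f ->
  \sw_(x, y <- a) S (f x) * f y = eps a *: 1.
Proof.
case=> lin_f Delta_f eps_f.
by rewrite -(Delta_f _ a (fun u v => S u * v)) ?sweedler_antipodel ?eps_f //; lin_tac.
Qed.

Lemma coalg_morph_antipoder f a : coalg_morph f ->
  \sw_(x, y <- a) f x * S (f y) = eps a *: 1.
Proof.
case=> lin_f Delta_f eps_f.
by rewrite -(Delta_f _ a (fun u v => u * S v)) ?sweedler_antipoder ?eps_f //; lin_tac.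
Qed.

Lemma sweedler4_contract a (X Y : H -> H -> H) :
  (forall b, sweedler b X = eps b *: 1) -> (forall b, sweedler b Y = eps b *: 1) ->
  sweedler4 a (fun b1 b2 c1 c2 => X b1 b2 * Y c1 c2) = eps a *: 1.
Proof.
move=> X_counit Y_counit; rewrite /sweedler4.
under eq_sweedler => b c.
  under eq_sweedler => b1 b2 do rewrite -mulr_sweedlerr Y_counit -scalerAr mulr1.
  rewrite -scaler_sweedler X_counit.
  over.
by rewrite (@sweedler_counitr_eq _ a _ (fun b => eps b *: 1)) //; lin_tac.
Qed.

Lemma lin_twistl f g y : linear f -> linear g -> linear (fun a => twist f g a y).
Proof. by move=> lin_f lin_g; rewrite /twist; lin_tac. Qed.

Lemma lin_twistr f g a : linear (twist f g a).
Proof. by rewrite /twist; lin_tac. Qed.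

Section Twist.
Variables f g : H -> H.
Hypotheses (f_morph : coalg_morph f) (g_morph : coalg_morph g).

Lemma sweedler_twist a y (V : lmodType F) (G : H -> H -> V) : bilinear_map G ->
  sweedler (twist f g a y) G =
  \sw_(a1, a2 <- a) \sw_(y1, y2 <- y) G (twist f g a1 y1) (twist f g a2 y2).
Proof.
case: f_morph g_morph => lin_f Delta_f _ [lin_g Delta_g _] G_bil.
rewrite /twist (lin_sweedler _ _ (sweedler_is_linear G_bil)).
transitivity (sweedler4 a (fun p1 p2 q1 q2 =>
    \sw_(y1, y2 <- y) G (f p1 * y1 * g q1) (f p2 * y2 * g q2))).
  rewrite /sweedler4; apply: eq_sweedler => p q.
  rewrite sweedler_mul; last by lin_tac.
  rewrite sweedler_mul; last by lin_tac.
  rewrite Delta_f; last by lin_tac.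
  apply: eq_sweedler => p1 p2.
  rewrite [RHS]exchange_sweedler; apply: eq_sweedler => y1 y2.
  by rewrite Delta_g //; lin_tac.
rewrite sweedler4_swap23; last by lin_tac.
rewrite /sweedler4; apply: eq_sweedler => a1 a2.
under [RHS]eq_sweedler => y1 y2 do rewrite bilinear_sweedlerl //.
under [RHS]eq_sweedler => y1 y2 do under eq_sweedler => p q do rewrite bilinear_sweedlerr //.
by rewrite [RHS]exchange_sweedler; apply: eq_sweedler => p q; rewrite [RHS]exchange_sweedler.
Qed.

Lemma eps_twist a y : eps (twist f g a y) = eps a * eps y.
Proof.
case: f_morph g_morph => _ _ eps_f [_ _ eps_g].
rewrite /twist (lin_sweedler _ _ eps_linear) /=.
under eq_sweedler => p q do rewrite !eps_mul eps_f eps_g.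
rewrite (@sweedler_counitr_eq _ a _ (fun p => (eps p * eps y : F^o))) //.
  by move=> k u v; rewrite /= (eps_linear k) mulrDl -mulrA.
by move=> p q; exact: (mulrC (eps p * eps y) (eps q)).
Qed.

End Twist.

(** * The descendent Hopf algebra *)

Section RotaBaxter.
Variables B1 B2 : H -> H.
Hypotheses (B1_hom : coalg_hom Delta eps B1) (B2_hom : coalg_hom Delta eps B2).
Hypotheses (B1_1 : B1 1 = 1) (B2_1 : B2 1 = 1).
Hypothesis RB : forall a b, B1 a * B1 b = B1 (desc_op Delta S B1 B2 a b) /\
                            B2 a * B2 b = B2 (desc_op Delta S B1 B2 a b).

Local Notation desc := (desc_op Delta S B1 B2).
Local Notation sigma := (cocycle Delta S B1 B2).
Local Notation T := (T_map Delta S B1 B2).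

Let B1_linear : linear B1. Proof. by case: B1_hom. Qed.
Let B2_linear : linear B2. Proof. by case: B2_hom. Qed.
Let B1_desc a b : B1 a * B1 b = B1 (desc a b) := (RB a b).1.
Let B2_desc a b : B2 a * B2 b = B2 (desc a b) := (RB a b).2.
Let B1_morph := coalg_hom_morph B1_hom.
Let B2_morph := coalg_hom_morph B2_hom.
Let SB1_morph := coalg_morph_comp coalg_morph_antipode B1_morph.
Let SB2_morph := coalg_morph_comp coalg_morph_antipode B2_morph.

Lemma desc_twist a b : desc a b = twist B1 (fun x => S (B2 x)) a b.
Proof. by []. Qed.

Lemma cocycle_desc a : sigma a = desc a 1.
Proof. by rewrite /cocycle /desc_op; under [RHS]eq_bigr do rewrite mulr1. Qed.

Lemma cocycle_sweedler a : sigma a = \sw_(x, y <- a) B1 x * S (B2 y).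
Proof. by []. Qed.

Lemma T_sweedler a : T a = \sw_(x, y <- a) S (B1 x) * B2 y.
Proof. by []. Qed.

Lemma T_twist a : T a = twist (fun x => S (B1 x)) B2 a 1.
Proof. by rewrite /T_map /twist /sweedler; under [RHS]eq_bigr do rewrite mulr1. Qed.

Lemma lin_descl (U : lmodType F) (h : U -> H) b :
  linear h -> linear (fun x => desc (h x) b).
Proof. exact: (lin_comp (lin_twistl b B1_linear (lin_comp S_linear B2_linear))). Qed.

Lemma lin_descr (U : lmodType F) (h : U -> H) a :
  linear h -> linear (fun x => desc a (h x)).
Proof. exact: (lin_comp (lin_twistr B1 (fun x => S (B2 x)) a)). Qed.

Lemma lin_cocycle (U : lmodType F) (h : U -> H) : linear h -> linear (fun x => sigma (h x)).
Proof. by move=> lin_h k x y; rewrite !cocycle_desc; apply: lin_descl. Qed.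

Lemma lin_T (U : lmodType F) (h : U -> H) : linear h -> linear (fun x => T (h x)).
Proof.
move=> lin_h k x y.
by rewrite !T_twist lin_h (lin_twistl _ (lin_comp S_linear B1_linear) B2_linear).
Qed.

Ltac lin_hint ::= first
  [apply: lin_descl | apply: lin_descr | apply: lin_cocycle | apply: lin_T | exact: lin_twistr].

Lemma sweedler_desc a b (V : lmodType F) (G : H -> H -> V) : bilinear_map G ->
  sweedler (desc a b) G = \sw_(a1, a2 <- a) \sw_(b1, b2 <- b) G (desc a1 b1) (desc a2 b2).
Proof. exact: (sweedler_twist B1_morph SB2_morph). Qed.

Lemma eps_desc a b : eps (desc a b) = eps a * eps b.
Proof. exact: (eps_twist B1_morph SB2_morph). Qed.

Lemma sweedler_cocycle a (V : lmodType F) (G : H -> H -> V) : bilinear_map G ->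
  sweedler (sigma a) G = \sw_(x, y <- a) G (sigma x) (sigma y).
Proof.
move=> G_bil; rewrite cocycle_desc sweedler_desc //; apply: eq_sweedler => x y.
by rewrite sweedler1 ?cocycle_desc //; lin_tac.
Qed.

Lemma sweedler_T a (V : lmodType F) (G : H -> H -> V) : bilinear_map G ->
  sweedler (T a) G = \sw_(x, y <- a) G (T x) (T y).
Proof.
move=> G_bil; rewrite T_twist (sweedler_twist SB1_morph B2_morph _ _ G_bil).
by apply: eq_sweedler => x y; rewrite sweedler1 ?T_twist //; lin_tac.
Qed.

Lemma eps_cocycle a : eps (sigma a) = eps a.
Proof. by rewrite cocycle_desc eps_desc eps1 mulr1. Qed.

(* (a∘b)∘c = B1(a1∘b1) c S(B2(a2∘b2)) = B1(a1) B1(b1) c S(B2 b2) S(B2 a2). *)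
Lemma desc_assoc a b c : desc (desc a b) c = desc a (desc b c).
Proof.
rewrite [LHS]desc_twist /twist sweedler_desc; last by lin_tac.
rewrite [RHS]desc_twist /twist; apply: eq_sweedler => a1 a2.
rewrite [in RHS]desc_twist /twist mulr_sweedlerr mulr_sweedlerl; apply: eq_sweedler => b1 b2.
by rewrite -B1_desc -B2_desc antipodeM !mulrA.
Qed.

Lemma desc1l a : desc 1 a = a.
Proof.
by rewrite desc_twist /twist sweedler1 ?B1_1 ?B2_1 ?antipode1 ?mulr1 ?mul1r //; lin_tac.
Qed.

Lemma cocycle_idem a : sigma (sigma a) = sigma a.
Proof. by rewrite !cocycle_desc desc_assoc desc1l. Qed.

Lemma desc_cocycle a b : desc (sigma a) (sigma b) = sigma (desc (sigma a) b).
Proof. by rewrite [sigma b]cocycle_desc -desc_assoc -cocycle_desc. Qed.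

Lemma desc_T a : \sw_(x, y <- a) desc x (T y) = eps a *: 1.
Proof.
transitivity (sweedler4 a (fun b1 b2 c1 c2 => B1 b1 * (S (B1 c1) * B2 c2) * S (B2 b2))).
  rewrite /sweedler4; apply: eq_sweedler => b c.
  rewrite desc_twist /twist; apply: eq_sweedler => b1 b2.
  by rewrite T_sweedler mulr_sweedlerr mulr_sweedlerl.
rewrite sweedler4_swap23; last by lin_tac.
rewrite sweedler4_swap34 /=; last by lin_tac.
rewrite -(@sweedler4_contract a (fun b c => B1 b * S (B1 c)) (fun b c => B2 b * S (B2 c))).
- by sweedler_congr; rewrite !mulrA.
- by move=> b; apply: coalg_morph_antipoder.
- by move=> b; apply: coalg_morph_antipoder.
Qed.

Section RBOperator.
Variable B : H -> H.
Hypotheses (B_morph : coalg_morph B) (B_desc : forall a b, B a * B b = B (desc a b)).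
Hypothesis B_1 : B 1 = 1.

Lemma RB_cocycle a : B (sigma a) = B a.
Proof. by rewrite cocycle_desc -B_desc B_1 mulr1. Qed.

(* S(B a) = S(B a1) B(a2 ∘ T a3) = S(B a1) B(a2) B(T a3) = B(T a). *)
Lemma RB_T a : B (T a) = S (B a).
Proof.
have [B_linear _ _] := B_morph.
transitivity (\sw_(x, y <- a) \sw_(u, v <- y) S (B x) * (B u * B (T v))); last first.
  rewrite -[RHS](sweedler_counitr a (lin_comp S_linear B_linear)).
  apply: eq_sweedler => x y; under eq_sweedler => u v do rewrite B_desc.
  rewrite -mulr_sweedlerr -(lin_sweedler _ _ B_linear) desc_T (linZ B_linear) B_1.
  by rewrite -scalerAr mulr1.
rewrite -(sweedler_coassoc a (K := fun x u v => S (B x) * (B u * B (T v)))); last by lin_tac.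
under eq_sweedler => e v.
  under eq_sweedler => x u do rewrite mulrA.
  rewrite -mulr_sweedlerl coalg_morph_antipodel // -scalerAl mul1r.
  over.
by rewrite (@sweedler_counitl_eq _ a _ (fun v => B (T v))) //; lin_tac.
Qed.

End RBOperator.

Lemma cocycle_T a : sigma (T a) = T a.
Proof.
rewrite cocycle_desc desc_twist /twist sweedler_T; last by lin_tac.
rewrite T_sweedler; apply: eq_sweedler => x y.
by rewrite (RB_T B1_morph B1_desc B1_1) (RB_T B2_morph B2_desc B2_1) antipodeK mulr1.
Qed.

Lemma T_desc_cocycle a : \sw_(x, y <- sigma a) desc (T x) y = eps (sigma a) *: 1.
Proof.
rewrite eps_cocycle sweedler_cocycle; last by lin_tac.
transitivity (sweedler4 a (fun b1 b2 c1 c2 => S (B1 b1) * (B1 c1 * S (B2 c2)) * B2 b2)).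
  rewrite /sweedler4; apply: eq_sweedler => b c.
  rewrite desc_twist /twist sweedler_T; last by lin_tac.
  rewrite sweedler_cocycle; last by lin_tac.
  apply: eq_sweedler => b1 b2.
  rewrite (RB_T B1_morph B1_desc B1_1) (RB_T B2_morph B2_desc B2_1) antipodeK.
  rewrite (RB_cocycle B1_desc B1_1) (RB_cocycle B2_desc B2_1).
  by rewrite cocycle_sweedler mulr_sweedlerr mulr_sweedlerl.
rewrite sweedler4_swap23; last by lin_tac.
rewrite sweedler4_swap34 /=; last by lin_tac.
rewrite -(@sweedler4_contract a (fun b c => S (B1 b) * B1 c) (fun b c => S (B2 b) * B2 c)).
- by sweedler_congr; rewrite !mulrA.
- by move=> b; apply: coalg_morph_antipodel.
- by move=> b; apply: coalg_morph_antipodel.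
Qed.

Local Notation image_cocycle := (fun x => exists a, x = sigma a).

Lemma image_cocycle_closed :
  [/\ image_cocycle 0,
      forall k x y, image_cocycle x -> image_cocycle y -> image_cocycle (k *: x + y),
      image_cocycle 1,
      forall x y, image_cocycle x -> image_cocycle y -> image_cocycle (desc x y)
    & forall x, image_cocycle x -> image_cocycle (T x)].
Proof.
have lin_sigma := lin_cocycle (@lin_id _ H).
split.
- by exists 0; rewrite (lin0 lin_sigma).
- by move=> k _ _ [a ->] [b ->]; exists (k *: a + b); rewrite lin_sigma.
- by exists 1; rewrite cocycle_desc desc1l.
- by move=> _ _ [a ->] [b ->]; exists (desc (sigma a) b); rewrite desc_cocycle.
- by move=> _ [a ->]; exists (T (sigma a)); rewrite cocycle_T.
Qed.

Lemma image_cocycle_hopf : hopf_on image_cocycle desc 1 Delta eps T.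
Proof.
case: hopfH => [[_ [_ [_ [[_ _ coA coU] _]]]] _].
have on_H a t : Arep image_cocycle Delta a t -> Arep (fun _ => True) Delta a t.
  by case=> _ ta; split.
split; [exact: image_cocycle_closed|split; [|split; [|split; [|split; [|split]]]]].
- move=> _ [a ->]; exists [seq (sigma p.1, sigma p.2) | p <- Delta a]; split.
    by move=> p /mapP [q _ ->]; split; [exists q.1|exists q.2].
  move=> phi /bilinear_formP phi_bil.
  by rewrite big_map; symmetry; apply: (sweedler_cocycle a phi_bil).
- split=> [k a a' b _ _ _|k a b b' _ _ _|a b c _ _ _|_ [a ->]].
  + exact: (lin_descl b (@lin_id _ H)).
  + exact: (lin_descr a (@lin_id _ H)).
  + exact: desc_assoc.
  + by rewrite desc1l -cocycle_desc cocycle_idem.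
- split=> [k a b _ _|k a b _ _|a t _ /on_H|a t _ /on_H].
  + exact: Delta_linear.
  + exact: eps_linear.
  + exact: coA.
  + exact: coU.
- split=> [a b ta tb _ _ [_ ha] [_ hb] phi /bilinear_formP phi_bil| | a b _ _ |].
  + transitivity (sweedler (desc a b) (phi : H -> H -> F^o)); first by [].
    rewrite big_allpairs_dep /= sweedler_desc //.
    rewrite (sweedler_teq2 ha); last by lin_tac.
    by apply: eq_bigr => p _; rewrite (sweedler_teq2 hb) //; lin_tac.
  + exact: Delta1.
  + exact: eps_desc.
  + exact: eps1.
- by move=> k a b _ _; apply: (lin_T (@lin_id _ H)).
- move=> _ t [a ->] [_ ta]; split.
  + rewrite -(sweedler_teq2 (G := fun x y => desc (T x) y) ta) ?T_desc_cocycle //.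
    by lin_tac.
  + by rewrite -(sweedler_teq2 (G := fun x y => desc x (T y)) ta) ?desc_T //; lin_tac.
Qed.

Lemma image_cocycle_cocomm_hopf :
  cocomm_hopf_on image_cocycle desc 1 Delta eps T.
Proof.
split; first exact: image_cocycle_hopf.
by case: hopfH => _ cocommH a _; apply: cocommH.
Qed.

End RotaBaxter.

End Sweedler.

Theorem mainTheorem1 (F : fieldType) (H : algType F)
    (Delta : H -> seq (H * H)) (eps : H -> F) (S : H -> H) (B1 B2 : H -> H) :
  [pchar F] =i pred0 ->
  rb_system Delta eps S B1 B2 ->
  cocomm_hopf_on (fun x : H => exists a, x = cocycle Delta S B1 B2 a)
    (desc_op Delta S B1 B2) 1 Delta eps (T_map Delta S B1 B2).
Proof.
move=> _ [hopfH B1_hom B2_hom [B1_1 B2_1] RB].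
exact: image_cocycle_cocomm_hopf.
Qed.
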